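(* Let $a,b,c,d>0$ and, on $\mathbb R^2$, let $G_B(0)=0$ and $G_B(u)=\frac{1}{|u|}\big((au_1^2+bu_2^2)u_1,\ (cu_1^2+du_2^2)u_2\big)$ for $u\ne0$. For $w\in\mathbb R^2$ set $|w|_1=(aw_1^2+bw_2^2)^{1/2}$, $|w|_2=(cw_1^2+dw_2^2)^{1/2}$. (i) If either $$\Big[b+c-\tfrac{(|w|_1+|w|_2)^2}{2}\Big]^2\le 4ad\ \text{ for all } w\in\mathbb R^2,\ |w|=1,$$ or $$\Big[b+c-\tfrac{(|w|_1-|w|_2)^2}{2}\Big]^2\le 4ad\ \text{ for all } w\in\mathbb R^2,\ |w|=1,$$ then $G_B$ is monotone. (ii) If either of these two conditions holds with strict inequality for all unit $w$, then $G_B$ is $3$-monotone.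
   Context: A map $F:\mathbb R^n\to\mathbb R^n$ is monotone if $(F(u)-F(v))\cdot(u-v)\ge0$ for all $u,v$; for $\alpha>0$ it is $\alpha$-monotone if there is $C>0$ with $(F(u)-F(v))\cdot(u-v)\ge C|u-v|^\alpha$ for all $u,v\in\mathbb R^n$. $|\cdot|$ is the Euclidean norm. *)

From Stdlib Require Import Reals Lra.
Open Scope R_scope.

Definition vec2 := (R * R)%type.

Definition vsub (u v : vec2) : vec2 := (fst u - fst v, snd u - snd v).
Definition dot (u v : vec2) : R := fst u * fst v + snd u * snd v.
Definition norm2 (u : vec2) : R := sqrt (fst u ^ 2 + snd u ^ 2).

Definition powr (x alpha : R) : R :=
  if Req_EM_T x 0 then 0 else Rpower x alpha.

Definition monotone (F : vec2 -> vec2) : Prop :=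
  forall u v : vec2, 0 <= dot (vsub (F u) (F v)) (vsub u v).

Definition alpha_monotone (alpha : R) (F : vec2 -> vec2) : Prop :=
  exists C : R, 0 < C /\
    forall u v : vec2, dot (vsub (F u) (F v)) (vsub u v) >= C * powr (norm2 (vsub u v)) alpha.

Definition GB_formula (a b c d : R) (u : vec2) : vec2 :=
  let u1 := fst u in let u2 := snd u in
  ((a * u1 ^ 2 + b * u2 ^ 2) * u1 / norm2 u,
   (c * u1 ^ 2 + d * u2 ^ 2) * u2 / norm2 u).

Definition GB (a b c d : R) (u : vec2) : vec2 :=
  if Req_EM_T (fst u) 0 then
    (if Req_EM_T (snd u) 0 then (0, 0) else GB_formula a b c d u)
  else GB_formula a b c d u.

Definition wnorm1 (a b : R) (w : vec2) : R := sqrt (a * fst w ^ 2 + b * snd w ^ 2).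
Definition wnorm2 (c d : R) (w : vec2) : R := sqrt (c * fst w ^ 2 + d * snd w ^ 2).

From Stdlib Require Import Reals Lra Psatz Classical.
From Coquelicot Require Import Coquelicot.
Open Scope R_scope.

(* Away from the origin |X|^3 <DG(X) h, h> is the polynomial [jform], a
   quadratic form in h.  By the mean value theorem along the segment from v to
   u, G is monotone whenever jform >= 0 (a segment through the origin is
   handled by the 2-homogeneity of G).  On the unit circle the diagonal
   entries A, C and the off-diagonal entry w1 w2 L of jform, with
   L = b + c - (|w|_1^2 + |w|_2^2)/2, satisfy
     A C - w1^2 w2^2 (2 sqrt(ad) + |w|_1 |w|_2)^2 = 2 (...)^2,
   and either hypothesis of the theorem gives |L| <= k0 + |w|_1 |w|_2 with
   k0 = 2 sqrt(ad).  A uniform det/trace bound then yields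
   jform >= margin(k0) |X|^4 |h|^2, where margin(2 sqrt(ad)) = 0, giving (i),
   and margin(k0) > 0 for k0 < 2 sqrt(ad).  For (ii), compactness of the
   circle provides such a k0; then G - del |u| u, which is G with all four
   coefficients lowered by del, is still monotone, while |u| u is 3-monotone
   with constant 1/2. *)

(* [jform a b c d X h] is |X|^3 <DG(X) h, h> for G = GB a b c d at X <> 0:
   the derivative of G along h, paired with h and cleared of denominators. *)
Definition jform (a b c d X1 X2 h1 h2 : R) : R :=
  (X1^2 + X2^2) * ((3*a*X1^2 + b*X2^2)*h1^2 + 2*(b+c)*X1*X2*h1*h2
                   + (c*X1^2 + 3*d*X2^2)*h2^2)
  - ((a*X1^2 + b*X2^2)*X1*h1 + (c*X1^2 + d*X2^2)*X2*h2) * (X1*h1 + X2*h2).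

Lemma jform_quadratic a b c d X1 X2 h1 h2 :
  jform a b c d X1 X2 h1 h2 =
  (2*a*X1^2*(X1^2+X2^2) + (a*X1^2+b*X2^2)*X2^2)*h1*h1
  + 2*(X1*X2*((X1^2+X2^2)*(b+c) - ((a*X1^2+b*X2^2)+(c*X1^2+d*X2^2))/2))*h1*h2
  + (2*d*X2^2*(X1^2+X2^2) + (c*X1^2+d*X2^2)*X1^2)*h2*h2.
Proof. unfold jform. field. Qed.

Lemma jform_homogeneous a b c d l X1 X2 h1 h2 :
  jform a b c d (l*X1) (l*X2) h1 h2 = l^4 * jform a b c d X1 X2 h1 h2.
Proof. unfold jform. ring. Qed.

(* Lowering all four coefficients by del subtracts the form of del |X| X. *)
Lemma jform_shift a b c d del X1 X2 h1 h2 :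
  jform (a-del) (b-del) (c-del) (d-del) X1 X2 h1 h2 =
  jform a b c d X1 X2 h1 h2
  - del*((X1^2+X2^2)^2*(h1^2+h2^2) + (X1^2+X2^2)*(X1*h1+X2*h2)^2).
Proof. unfold jform. ring. Qed.

(* A uniform margin survives lowering the coefficients by at most half of it,
   since the subtracted form is at most 2 |X|^4 |h|^2 by Cauchy-Schwarz. *)
Lemma jform_shift_nonneg a b c d kappa del :
  0 <= del <= kappa / 2 ->
  (forall X1 X2 h1 h2,
     kappa * (X1^2+X2^2)^2 * (h1^2+h2^2) <= jform a b c d X1 X2 h1 h2) ->
  forall X1 X2 h1 h2, 0 <= jform (a-del) (b-del) (c-del) (d-del) X1 X2 h1 h2.
Proof.
intros Hdel Hmargin X1 X2 h1 h2. rewrite jform_shift.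
specialize (Hmargin X1 X2 h1 h2).
set (T := (X1^2+X2^2)^2*(h1^2+h2^2)) in *.
assert (HT : 0 <= T) by (unfold T; apply Rmult_le_pos; nra).
assert (Hcs : (X1^2+X2^2)*(X1*h1+X2*h2)^2 <= T).
{ assert (E : T - (X1^2+X2^2)*(X1*h1+X2*h2)^2 = (X1^2+X2^2)*(X1*h2-X2*h1)^2)
    by (unfold T; ring).
  assert (0 <= (X1^2+X2^2)*(X1*h2-X2*h1)^2) by (apply Rmult_le_pos; [nra | apply pow2_ge_0]).
  lra. }
replace (kappa * (X1 ^ 2 + X2 ^ 2) ^ 2 * (h1 ^ 2 + h2 ^ 2)) with (kappa*T) in Hmargin
  by (unfold T; ring).
nra.
Qed.

Lemma quad_nonneg A B C x y : 0 <= A -> 0 <= C -> B*B <= A*C ->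
  0 <= A*x*x + 2*B*x*y + C*y*y.
Proof.
intros HA HC HB. destruct (Rle_lt_or_eq_dec 0 A HA) as [HA'|<-].
- assert (E : A*(A*x*x + 2*B*x*y + C*y*y) = (A*x+B*y)^2 + (A*C-B*B)*y^2) by ring.
  assert (0 <= (A*x+B*y)^2 + (A*C-B*B)*y^2).
  { apply Rplus_le_le_0_compat; [apply pow2_ge_0 |].
    apply Rmult_le_pos; [lra | apply pow2_ge_0]. }
  nra.
- assert (B = 0) by nra. subst B. nra.
Qed.

Lemma quad_margin A B C x y : 0 < A -> 0 < C -> B*B <= A*C ->
  (A*C - B*B)/(A+C) * (x^2+y^2) <= A*x*x + 2*B*x*y + C*y*y.
Proof.
intros HA HC HB. set (kappa := (A*C - B*B)/(A+C)).
assert (HAk : A - kappa = (A*A + B*B)/(A+C)) by (unfold kappa; field; lra).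
assert (HCk : C - kappa = (C*C + B*B)/(A+C)) by (unfold kappa; field; lra).
assert (Hdet : (A-kappa)*(C-kappa) = B*B + kappa*kappa) by (unfold kappa; field; lra).
assert (Hshift : 0 <= (A-kappa)*x*x + 2*B*x*y + (C-kappa)*y*y).
{ apply quad_nonneg.
  - rewrite HAk. apply Rdiv_le_0_compat; nra.
  - rewrite HCk. apply Rdiv_le_0_compat; nra.
  - rewrite Hdet. nra. }
nra.
Qed.

Lemma quad_margin_ratio A B C r m T x y :
  0 < m -> m <= A -> m <= C -> A + C <= T -> 0 <= r <= 1 -> B*B <= r^2*(A*C) ->
  (1 - r^2) * m^2 / T * (x^2+y^2) <= A*x*x + 2*B*x*y + C*y*y.
Proof.
intros Hm HA HC HT Hr HB.
assert (Hr2 : 0 <= 1 - r^2) by nra.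
assert (Hdet : (1 - r^2) * m^2 <= A*C - B*B).
{ assert (m^2 <= A*C) by nra. nra. }
assert (Hkappa : (1 - r^2) * m^2 / T <= (A*C - B*B)/(A+C)).
{ unfold Rdiv. apply Rmult_le_compat; [nra | left; apply Rinv_0_lt_compat; lra | lra |].
  apply Rinv_le_contravar; lra. }
apply Rle_trans with ((A*C - B*B)/(A+C) * (x^2+y^2)).
- apply Rmult_le_compat_r; nra.
- apply quad_margin; nra.
Qed.

Lemma offdiag_ratio A C L r q w1 w2 :
  w1^2*w2^2*q^2 <= A*C -> L^2 <= r^2 * q^2 -> (w1*w2*L)*(w1*w2*L) <= r^2*(A*C).
Proof.
intros Hdiag HL.
replace ((w1*w2*L)*(w1*w2*L)) with (w1^2*w2^2*L^2) by ring.
apply Rle_trans with (r^2 * (w1^2*w2^2*q^2)).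
- replace (r^2 * (w1^2*w2^2*q^2)) with (w1^2*w2^2 * (r^2 * q^2)) by ring.
  apply Rmult_le_compat_l; [apply Rmult_le_pos; apply pow2_ge_0 | exact HL].
- apply Rmult_le_compat_l; [apply pow2_ge_0 | exact Hdiag].
Qed.

(* The case distinction at the origin in [GB] is immaterial: the formula
   already vanishes there because / 0 = 0. *)
Lemma GB_eq a b c d u : GB a b c d u = GB_formula a b c d u.
Proof.
destruct u as [u1 u2]. unfold GB. simpl.
destruct (Req_EM_T u1 0); destruct (Req_EM_T u2 0); auto.
subst. unfold GB_formula. simpl. f_equal; unfold Rdiv; ring.
Qed.

Lemma GB_formula_scale a b c d l h1 h2 :
  GB_formula a b c d (l*h1, l*h2) =
  (l * Rabs l * fst (GB_formula a b c d (h1,h2)),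
   l * Rabs l * snd (GB_formula a b c d (h1,h2))).
Proof.
unfold GB_formula, norm2. cbn [fst snd].
replace ((l*h1)^2+(l*h2)^2) with (l^2*(h1^2+h2^2)) by ring.
rewrite sqrt_mult by nra. rewrite <- (pow2_abs l), sqrt_pow2 by apply Rabs_pos.
destruct (Req_dec l 0) as [->|Hl]; [f_equal; unfold Rdiv; ring |].
destruct (Req_dec (sqrt (h1^2+h2^2)) 0) as [H0|H0].
{ rewrite H0. f_equal; unfold Rdiv; rewrite Rmult_0_r, Rinv_0; ring. }
destruct (Rcase_abs l) as [Hneg|Hpos].
- rewrite (Rabs_left l Hneg). f_equal; field; split; auto; lra.
- rewrite (Rabs_right l Hpos). f_equal; field; split; auto.
Qed.

Section Monotonicity_criterion.
Variables a b c d : R.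
Hypotheses (ha : 0 <= a) (hd : 0 <= d) (hbc : 0 <= b + c).

(* G(h) . h = (a h1^4 + (b+c) h1^2 h2^2 + d h2^4) / |h| >= 0. *)
Lemma GB_radial_nonneg h1 h2 :
  0 <= fst (GB_formula a b c d (h1,h2)) * h1 + snd (GB_formula a b c d (h1,h2)) * h2.
Proof.
unfold GB_formula. cbn [fst snd]. set (N := norm2 (h1,h2)).
replace ((a * h1 ^ 2 + b * h2 ^ 2) * h1 / N * h1 + (c * h1 ^ 2 + d * h2 ^ 2) * h2 / N * h2)
  with ((a*(h1^2)^2 + (b+c)*(h1^2*h2^2) + d*(h2^2)^2) * / N) by (unfold Rdiv; ring).
apply Rmult_le_pos.
- assert (0 <= h1^2) by apply pow2_ge_0. assert (0 <= h2^2) by apply pow2_ge_0.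
  assert (0 <= a*(h1^2)^2) by (apply Rmult_le_pos; [lra | apply pow2_ge_0]).
  assert (0 <= d*(h2^2)^2) by (apply Rmult_le_pos; [lra | apply pow2_ge_0]).
  assert (0 <= (b+c)*(h1^2*h2^2)) by (apply Rmult_le_pos; [lra | nra]).
  lra.
- assert (0 <= N) by apply sqrt_pos.
  destruct (Req_dec N 0) as [->|HN]; [rewrite Rinv_0; lra|].
  left; apply Rinv_0_lt_compat; lra.
Qed.

(* Monotonicity on a segment through the origin: there u = (1-t) h and
   v = -t h, and by homogeneity the pairing is ((1-t)^2 + t^2) G(h) . h. *)
Lemma monotone_through_origin h1 h2 t : 0 <= t <= 1 ->
  0 <= dot (vsub (GB_formula a b c d ((1-t)*h1,(1-t)*h2))
                 (GB_formula a b c d ((-t)*h1,(-t)*h2)))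
           (vsub ((1-t)*h1,(1-t)*h2) ((-t)*h1,(-t)*h2)).
Proof.
intros Ht. rewrite !GB_formula_scale, (Rabs_right (1-t)), (Rabs_left1 (-t)) by lra.
unfold dot, vsub. cbn [fst snd].
assert (H := GB_radial_nonneg h1 h2).
set (g1 := fst (GB_formula a b c d (h1, h2))) in *.
set (g2 := snd (GB_formula a b c d (h1, h2))) in *.
replace ((1 - t) * (1 - t) * g1 - - t * - - t * g1) with (((1-t)^2+t^2)*g1) by ring.
replace ((1 - t) * (1 - t) * g2 - - t * - - t * g2) with (((1-t)^2+t^2)*g2) by ring.
replace ((1 - t) * h1 - - t * h1) with h1 by ring.
replace ((1 - t) * h2 - - t * h2) with h2 by ring.
replace (((1-t)^2+t^2)*g1*h1 + ((1-t)^2+t^2)*g2*h2) with (((1-t)^2+t^2)*(g1*h1+g2*h2))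
  by ring.
apply Rmult_le_pos; [nra | exact H].
Qed.

Definition GB_profile (v1 v2 h1 h2 t : R) : R :=
  (a*(v1+t*h1)^2+b*(v2+t*h2)^2)*(v1+t*h1)/sqrt((v1+t*h1)^2+(v2+t*h2)^2)*h1
   + (c*(v1+t*h1)^2+d*(v2+t*h2)^2)*(v2+t*h2)/sqrt((v1+t*h1)^2+(v2+t*h2)^2)*h2.

Lemma GB_profile_derive v1 v2 h1 h2 t : 0 < (v1+t*h1)^2+(v2+t*h2)^2 ->
  is_derive (GB_profile v1 v2 h1 h2) t
    (jform a b c d (v1+t*h1) (v2+t*h2) h1 h2 / sqrt ((v1+t*h1)^2+(v2+t*h2)^2) ^ 3).
Proof.
intros H. unfold GB_profile, jform.
set (X1 := v1+t*h1) in *. set (X2 := v2+t*h2) in *.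
assert (HS : X1*(X1*1)+X2*(X2*1) = X1^2+X2^2) by ring.
assert (HNp : 0 < sqrt (X1^2+X2^2)) by (apply sqrt_lt_R0; lra).
assert (HN : sqrt (X1^2+X2^2) * sqrt (X1^2+X2^2) = X1^2+X2^2) by (apply sqrt_sqrt; lra).
auto_derive; fold X1 X2; rewrite ?HS.
- repeat split; lra.
- set (N := sqrt (X1^2+X2^2)) in *. rewrite <- HN. field. lra.
Qed.

Lemma monotone_of_jform_nonneg :
  (forall X1 X2 h1 h2, 0 <= jform a b c d X1 X2 h1 h2) -> monotone (GB a b c d).
Proof.
intros Hform [u1 u2] [v1 v2]. rewrite !GB_eq.
set (h1 := u1 - v1). set (h2 := u2 - v2).
assert (Hu1 : u1 = v1 + h1) by (unfold h1; ring).
assert (Hu2 : u2 = v2 + h2) by (unfold h2; ring).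
clearbody h1 h2.
destruct (classic (exists t, 0<=t<=1 /\ v1 + t*h1 = 0 /\ v2 + t*h2 = 0))
  as [[t [Ht [E1 E2]]] | Hno].
- replace (u1,u2) with ((1-t)*h1,(1-t)*h2) by (f_equal; lra).
  replace (v1,v2) with ((-t)*h1,(-t)*h2) by (f_equal; lra).
  apply monotone_through_origin; exact Ht.
- assert (Hpos : forall t, 0 <= t <= 1 -> 0 < (v1+t*h1)^2+(v2+t*h2)^2).
  { intros t Ht. destruct (Rlt_or_le 0 ((v1+t*h1)^2+(v2+t*h2)^2)) as [|Hle]; auto.
    exfalso. apply Hno. exists t. split; auto.
    assert (0 <= (v1+t*h1)^2) by apply pow2_ge_0.
    assert (0 <= (v2+t*h2)^2) by apply pow2_ge_0.
    split; nra. }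
  destruct (MVT_gen (GB_profile v1 v2 h1 h2) 0 1
    (fun t => jform a b c d (v1+t*h1) (v2+t*h2) h1 h2 / sqrt ((v1+t*h1)^2+(v2+t*h2)^2) ^ 3))
    as [x [Hx Hmvt]]; rewrite ?Rmin_left, ?Rmax_right in * by lra.
  + intros x Hx. apply GB_profile_derive, Hpos. lra.
  + intros x Hx. apply derivable_continuous_pt.
    eexists. apply is_derive_Reals, GB_profile_derive, Hpos. lra.
  + assert (Hslope : 0 <= jform a b c d (v1+x*h1) (v2+x*h2) h1 h2
                          / sqrt ((v1+x*h1)^2+(v2+x*h2)^2) ^ 3).
    { apply Rmult_le_pos; [apply Hform |].
      left. apply Rinv_0_lt_compat, pow_lt, sqrt_lt_R0, Hpos. exact Hx. }
    replace (dot _ _) with (GB_profile v1 v2 h1 h2 1 - GB_profile v1 v2 h1 h2 0); [nra |].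
    unfold GB_profile, dot, vsub, GB_formula, norm2. cbn [fst snd].
    rewrite Hu1, Hu2, !Rmult_1_l, !Rmult_0_l, !Rplus_0_r. ring.
Qed.

End Monotonicity_criterion.

Lemma norm2_sq u : norm2 u * norm2 u = fst u ^ 2 + snd u ^ 2.
Proof. apply sqrt_sqrt, Rplus_le_le_0_compat; apply pow2_ge_0. Qed.

Lemma GB_component_split A B del x y N : N*N = x^2+y^2 ->
  (A*x^2+B*y^2)*x/N = ((A-del)*x^2+(B-del)*y^2)*x/N + del*(N*x).
Proof.
intros HN.
replace ((A*x^2+B*y^2)*x/N) with (((A-del)*x^2+(B-del)*y^2)*x/N + del*((x^2+y^2)*x/N))
  by (unfold Rdiv; ring).
rewrite <- HN. destruct (Req_dec N 0) as [->|H0].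
- unfold Rdiv. rewrite Rinv_0. ring.
- field. exact H0.
Qed.

Lemma GB_split a b c d del u v :
  dot (vsub (GB_formula a b c d u) (GB_formula a b c d v)) (vsub u v) =
  dot (vsub (GB_formula (a-del) (b-del) (c-del) (d-del) u)
            (GB_formula (a-del) (b-del) (c-del) (d-del) v)) (vsub u v)
  + del * ((norm2 u * fst u - norm2 v * fst v) * (fst u - fst v)
           + (norm2 u * snd u - norm2 v * snd v) * (snd u - snd v)).
Proof.
destruct u as [u1 u2], v as [v1 v2]. unfold dot, vsub, GB_formula. cbn [fst snd].
assert (Hu := norm2_sq (u1,u2)). assert (Hv := norm2_sq (v1,v2)).
cbn [fst snd] in Hu, Hv.
assert (Hu' : norm2 (u1,u2) * norm2 (u1,u2) = u2^2+u1^2) by lra.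
assert (Hv' : norm2 (v1,v2) * norm2 (v1,v2) = v2^2+v1^2) by lra.
rewrite (GB_component_split a b del u1 u2 _ Hu), (GB_component_split a b del v1 v2 _ Hv).
replace ((c * u1 ^ 2 + d * u2 ^ 2) * u2) with ((d * u2 ^ 2 + c * u1 ^ 2) * u2) by ring.
replace ((c * v1 ^ 2 + d * v2 ^ 2) * v2) with ((d * v2 ^ 2 + c * v1 ^ 2) * v2) by ring.
rewrite (GB_component_split d c del u2 u1 _ Hu'), (GB_component_split d c del v2 v1 _ Hv').
unfold Rdiv. ring.
Qed.

(* u |-> |u| u is 3-monotone with constant 1/2.  With p = |u|, q = |v|,
   D = |u - v| and s = u . v the pairing is p^3 + q^3 - (p+q) s, which exceeds
   (p+q) D^2 / 2 >= D^3 / 2 since D <= p + q. *)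
Lemma norm_scaled_3monotone u1 u2 v1 v2 :
  norm2 (u1-v1, u2-v2) ^ 3 / 2 <=
  (norm2 (u1,u2) * u1 - norm2 (v1,v2) * v1) * (u1 - v1)
  + (norm2 (u1,u2) * u2 - norm2 (v1,v2) * v2) * (u2 - v2).
Proof.
set (p := norm2 (u1,u2)). set (q := norm2 (v1,v2)). set (D := norm2 (u1-v1,u2-v2)).
assert (Hp : p*p = u1^2+u2^2) by apply (norm2_sq (u1,u2)).
assert (Hq : q*q = v1^2+v2^2) by apply (norm2_sq (v1,v2)).
assert (HD : D*D = (u1-v1)^2+(u2-v2)^2) by apply (norm2_sq (u1-v1,u2-v2)).
assert (p0 : 0 <= p) by apply sqrt_pos. assert (q0 : 0 <= q) by apply sqrt_pos.
assert (D0 : 0 <= D) by apply sqrt_pos.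
set (s := u1*v1+u2*v2).
replace ((p * u1 - q * v1) * (u1 - v1) + (p * u2 - q * v2) * (u2 - v2))
  with (p*(p*p) + q*(q*q) - (p+q)*s) by (rewrite Hp, Hq; unfold s; ring).
assert (HD2 : D*D = p*p + q*q - 2*s) by (rewrite HD, Hp, Hq; unfold s; ring).
assert (Hcs : s*s <= (p*q)*(p*q)).
{ replace ((p*q)*(p*q)) with ((p*p)*(q*q)) by ring. rewrite Hp, Hq. unfold s.
  assert (0 <= (u1*v2-u2*v1)^2) by apply pow2_ge_0. nra. }
clearbody p q D s.
assert (Hpq : 0 <= p*q) by (apply Rmult_le_pos; assumption).
assert (Hs : - (p*q) <= s) by (destruct (Rle_or_lt (-(p*q)) s); [assumption | nra]).
assert (Htri : D <= p + q) by (destruct (Rle_or_lt D (p+q)); [assumption | nra]).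
assert (0 <= (p+q)*(p-q)^2/2) by (assert (0 <= (p-q)^2) by apply pow2_ge_0; nra).
assert (D*(D*D) <= (p+q)*(D*D)) by (apply Rmult_le_compat_r; nra).
replace (D^3/2) with (D*(D*D)/2) by field.
replace (p*(p*p) + q*(q*q) - (p+q)*s) with ((p+q)*(D*D)/2 + (p+q)*(p-q)^2/2)
  by (rewrite HD2; field).
lra.
Qed.

Lemma powr_3 x : 0 <= x -> powr x 3 = x^3.
Proof.
intros Hx. unfold powr. destruct (Req_EM_T x 0) as [->|Hx0]; [ring |].
replace 3 with (INR 3) by (simpl; ring). apply Rpower_pow. lra.
Qed.

(* Determinant identity behind the hypothesis of the theorem: with a = sa^2,
   d = sd^2, |w| = 1 and n1, n2 the weighted norms of w, the left factors are
   the diagonal entries of jform at w. *)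
Lemma diagonal_product_identity sa sd w1 w2 n1 n2 :
  (2*sa^2*w1^2 + n1^2*w2^2) * (2*sd^2*w2^2 + n2^2*w1^2)
  - w1^2*w2^2*(2*sa*sd + n1*n2)^2 = 2*(sa*w1^2*n2 - sd*w2^2*n1)^2.
Proof. ring. Qed.

Section Positive_coefficients.
Variables a b c d : R.
Hypotheses (ha : 0 < a) (hb : 0 < b) (hc : 0 < c) (hd : 0 < d).

Definition coef_min : R := Rmin (Rmin a b) (Rmin c d).
Definition coef_max : R := Rmax (Rmax a b) (Rmax c d).

Lemma coef_min_bounds :
  0 < coef_min /\ coef_min <= a /\ coef_min <= b /\ coef_min <= c /\ coef_min <= d.
Proof.
unfold coef_min. repeat split.
- repeat apply Rmin_case; assumption.
- apply Rle_trans with (Rmin a b); apply Rmin_l.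
- apply Rle_trans with (Rmin a b); [apply Rmin_l | apply Rmin_r].
- apply Rle_trans with (Rmin c d); [apply Rmin_r | apply Rmin_l].
- apply Rle_trans with (Rmin c d); apply Rmin_r.
Qed.

Lemma coef_max_bounds :
  a <= coef_max /\ b <= coef_max /\ c <= coef_max /\ d <= coef_max.
Proof.
unfold coef_max. repeat split.
- apply Rle_trans with (Rmax a b); apply Rmax_l.
- apply Rle_trans with (Rmax a b); [apply Rmax_r | apply Rmax_l].
- apply Rle_trans with (Rmax c d); [apply Rmax_l | apply Rmax_r].
- apply Rle_trans with (Rmax c d); apply Rmax_r.
Qed.

Definition kcrit : R := 2 * sqrt a * sqrt d.

Lemma kcrit_pos : 0 < kcrit.
Proof.
unfold kcrit. assert (0 < sqrt a) by (apply sqrt_lt_R0; lra).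
assert (0 < sqrt d) by (apply sqrt_lt_R0; lra). nra.
Qed.

Lemma kcrit_sq : kcrit ^ 2 = 4 * a * d.
Proof.
unfold kcrit. replace ((2 * sqrt a * sqrt d) ^ 2) with (4 * sqrt a ^ 2 * sqrt d ^ 2) by ring.
rewrite !pow2_sqrt by lra. ring.
Qed.

Definition margin_ratio (k0 : R) : R := (k0 + coef_max) / (kcrit + coef_max).
Definition margin (k0 : R) : R := (1 - margin_ratio k0 ^ 2) * coef_min ^ 2 / (4 * coef_max).

Lemma margin_ratio_bounds k0 : 0 <= k0 <= kcrit -> 0 <= margin_ratio k0 <= 1.
Proof.
intros Hk0. assert (Hk := kcrit_pos). destruct coef_max_bounds as [HM _].
unfold margin_ratio. split.
- apply Rdiv_le_0_compat; lra.
- apply Rmult_le_reg_r with (kcrit + coef_max); [lra |].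
  unfold Rdiv. rewrite Rmult_assoc, Rinv_l by lra. lra.
Qed.

Lemma margin_ratio_spec k0 p : 0 <= k0 <= kcrit -> 0 <= p <= coef_max ->
  k0 + p <= margin_ratio k0 * (kcrit + p).
Proof.
intros Hk0 Hp. assert (Hk := kcrit_pos). unfold margin_ratio.
assert (E : (k0 + coef_max) / (kcrit + coef_max) * (kcrit + p) - (k0 + p)
            = (coef_max - p) * (kcrit - k0) / (kcrit + coef_max)) by (field; lra).
assert (0 <= (coef_max - p) * (kcrit - k0) / (kcrit + coef_max))
  by (apply Rdiv_le_0_compat; [apply Rmult_le_pos |]; lra).
lra.
Qed.

Lemma margin_critical : margin kcrit = 0.
Proof.
assert (Hk := kcrit_pos). destruct coef_max_bounds as [HM _].
unfold margin, margin_ratio. unfold Rdiv. rewrite Rinv_r by lra. ring.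
Qed.

Lemma margin_pos k0 : 0 <= k0 < kcrit -> 0 < margin k0.
Proof.
intros Hk0. destruct coef_min_bounds as [Hm _]. destruct coef_max_bounds as [HM _].
assert (Hr : margin_ratio k0 < 1).
{ unfold margin_ratio. apply Rmult_lt_reg_r with (kcrit + coef_max); [lra |].
  unfold Rdiv. rewrite Rmult_assoc, Rinv_l by lra. lra. }
assert (Hr0 := proj1 (margin_ratio_bounds k0 ltac:(lra))).
unfold margin. apply Rdiv_lt_0_compat; [| lra].
apply Rmult_lt_0_compat; [nra | apply pow_lt; exact Hm].
Qed.

(* The hypothesis says the off-diagonal
   entry w1 w2 L of jform satisfies |L| <= k0 + n1 n2; the determinant identity
   bounds w1^2 w2^2 (kcrit + n1 n2)^2 by the product of the diagonal entries. *)
Lemma unit_margin w1 w2 n1 n2 k0 h1 h2 :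
  w1^2 + w2^2 = 1 -> 0 <= n1 -> 0 <= n2 ->
  n1^2 = a*w1^2 + b*w2^2 -> n2^2 = c*w1^2 + d*w2^2 ->
  0 <= k0 <= kcrit -> Rabs (b + c - (n1^2 + n2^2)/2) <= k0 + n1*n2 ->
  margin k0 * (h1^2 + h2^2) <= jform a b c d w1 w2 h1 h2.
Proof.
intros Hw Hn1 Hn2 Hn1e Hn2e Hk0 Hband.
destruct coef_min_bounds as (Hm & Hma & Hmb & Hmc & Hmd).
destruct coef_max_bounds as (HMa & HMb & HMc & HMd).
set (m := coef_min) in *. set (M := coef_max) in *.
set (r := margin_ratio k0). assert (Hr : 0 <= r <= 1) by exact (margin_ratio_bounds k0 Hk0).
rewrite jform_quadratic, Hw, <- Hn1e, <- Hn2e.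
set (A := 2*a*w1^2*1 + n1^2*w2^2).
set (C := 2*d*w2^2*1 + n2^2*w1^2).
set (L := 1*(b+c) - (n1^2 + n2^2)/2).
assert (HL : Rabs L <= k0 + n1*n2) by (unfold L; rewrite Rmult_1_l; exact Hband).
assert (Hw1 : 0 <= w1^2) by apply pow2_ge_0. assert (Hw2 : 0 <= w2^2) by apply pow2_ge_0.
assert (Hn1m : m <= n1^2 <= M) by (rewrite Hn1e; split; nra).
assert (Hn2m : m <= n2^2 <= M) by (rewrite Hn2e; split; nra).
assert (HA : m <= A <= 2*M) by (unfold A; split; nra).
assert (HC : m <= C <= 2*M) by (unfold C; split; nra).
assert (Hp : 0 <= n1*n2 <= M).
{ split; [nra |]. assert ((n1*n2)^2 <= M^2) by nra. nra. }
assert (Hdiag : w1^2*w2^2*(kcrit + n1*n2)^2 <= A*C).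
{ assert (Hid := diagonal_product_identity (sqrt a) (sqrt d) w1 w2 n1 n2).
  rewrite !pow2_sqrt in Hid by lra. fold kcrit in Hid. unfold A, C.
  assert (0 <= 2*(sqrt a*w1^2*n2 - sqrt d*w2^2*n1)^2)
    by (apply Rmult_le_pos; [lra | apply pow2_ge_0]).
  replace (2*a*w1^2*1) with (2*a*w1^2) by ring.
  replace (2*d*w2^2*1) with (2*d*w2^2) by ring. lra. }
assert (HL2 : L^2 <= r^2 * (kcrit + n1*n2)^2).
{ rewrite <- (pow2_abs L), <- Rpow_mult_distr. apply pow_incr.
  split; [apply Rabs_pos |]. apply Rle_trans with (k0 + n1*n2); [exact HL |].
  apply margin_ratio_spec; assumption. }
unfold margin. fold m M r.
apply quad_margin_ratio; try lra.
exact (offdiag_ratio A C L r (kcrit + n1*n2) w1 w2 Hdiag HL2).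
Qed.

Lemma wnorm1_sq w : wnorm1 a b w ^ 2 = a * fst w ^ 2 + b * snd w ^ 2.
Proof.
apply pow2_sqrt. assert (0 <= fst w ^ 2) by apply pow2_ge_0.
assert (0 <= snd w ^ 2) by apply pow2_ge_0. nra.
Qed.

Lemma wnorm2_sq w : wnorm2 c d w ^ 2 = c * fst w ^ 2 + d * snd w ^ 2.
Proof.
apply pow2_sqrt. assert (0 <= fst w ^ 2) by apply pow2_ge_0.
assert (0 <= snd w ^ 2) by apply pow2_ge_0. nra.
Qed.

(* The hypothesis of the theorem, in the symmetric form it is used in:
   |b + c - (|w|_1^2 + |w|_2^2)/2| <= k0 + |w|_1 |w|_2 on the unit circle. *)
Definition band_condition (k0 : R) : Prop :=
  forall w : vec2, norm2 w = 1 ->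
    Rabs (b + c - (wnorm1 a b w ^ 2 + wnorm2 c d w ^ 2) / 2)
    <= k0 + wnorm1 a b w * wnorm2 c d w.

(* By degree-4 homogeneity in X, the unit-circle margin holds everywhere. *)
Lemma form_margin k0 : 0 <= k0 <= kcrit -> band_condition k0 ->
  forall X1 X2 h1 h2,
    margin k0 * (X1^2+X2^2)^2 * (h1^2+h2^2) <= jform a b c d X1 X2 h1 h2.
Proof.
intros Hk0 Hband X1 X2 h1 h2.
assert (HX1 : 0 <= X1^2) by apply pow2_ge_0. assert (HX2 : 0 <= X2^2) by apply pow2_ge_0.
destruct (Req_dec (X1^2+X2^2) 0) as [HS|HS].
{ assert (X1 = 0) by nra. assert (X2 = 0) by nra. subst.
  rewrite HS. unfold jform. lra. }
set (S := X1^2+X2^2) in *.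
assert (HSpos : 0 < S) by (unfold S in *; lra).
set (l := / sqrt S).
assert (Hl2 : l^2 * S = 1).
{ unfold l. rewrite pow_inv, pow2_sqrt by lra. field. lra. }
set (w := (l*X1, l*X2)).
assert (Hw : fst w ^ 2 + snd w ^ 2 = 1) by (cbn; unfold S in Hl2; nra).
assert (Hwn : norm2 w = 1) by (unfold norm2; rewrite Hw; apply sqrt_1).
assert (Hunit := unit_margin (fst w) (snd w) (wnorm1 a b w) (wnorm2 c d w) k0 h1 h2
  Hw (sqrt_pos _) (sqrt_pos _) (wnorm1_sq w) (wnorm2_sq w) Hk0 (Hband w Hwn)).
cbn [fst snd w] in Hunit. rewrite jform_homogeneous in Hunit.
replace (jform a b c d X1 X2 h1 h2) with (S^2 * (l^4 * jform a b c d X1 X2 h1 h2))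
  by (replace (S^2 * (l^4 * jform a b c d X1 X2 h1 h2))
        with ((l^2 * S)^2 * jform a b c d X1 X2 h1 h2) by ring;
      rewrite Hl2; ring).
replace (margin k0 * S ^ 2 * (h1 ^ 2 + h2 ^ 2)) with (S^2 * (margin k0 * (h1^2 + h2^2)))
  by ring.
apply Rmult_le_compat_l; [apply pow2_ge_0 | exact Hunit].
Qed.

Definition defect (sg : R) (w : vec2) : R :=
  b + c - (wnorm1 a b w + sg * wnorm2 c d w) ^ 2 / 2.

Lemma either_condition (P : R -> Prop) :
  (forall w : vec2, norm2 w = 1 -> P (b + c - (wnorm1 a b w + wnorm2 c d w) ^ 2 / 2))
  \/ (forall w : vec2, norm2 w = 1 -> P (b + c - (wnorm1 a b w - wnorm2 c d w) ^ 2 / 2)) ->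
  exists sg, (sg = 1 \/ sg = -1) /\ forall w : vec2, norm2 w = 1 -> P (defect sg w).
Proof.
intros [H|H]; [exists 1 | exists (-1)]; (split; [lra |]); intros w Hw; unfold defect.
- rewrite Rmult_1_l. exact (H w Hw).
- replace (wnorm1 a b w + -1 * wnorm2 c d w) with (wnorm1 a b w - wnorm2 c d w) by ring.
  exact (H w Hw).
Qed.

(* |defect sg w| <= k0 gives the band condition, since
   defect sg w = b + c - (|w|_1^2 + |w|_2^2)/2 - sg |w|_1 |w|_2. *)
Lemma band_of_defect sg k0 : (sg = 1 \/ sg = -1) -> 0 <= k0 ->
  (forall w : vec2, norm2 w = 1 -> defect sg w ^ 2 <= k0 ^ 2) -> band_condition k0.
Proof.
intros Hsg Hk0 Hdefect w Hw. specialize (Hdefect w Hw). unfold defect in Hdefect.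
assert (Hn1 : 0 <= wnorm1 a b w) by apply sqrt_pos.
assert (Hn2 : 0 <= wnorm2 c d w) by apply sqrt_pos.
set (n1 := wnorm1 a b w) in *. set (n2 := wnorm2 c d w) in *.
set (D := b + c - (n1 + sg * n2) ^ 2 / 2) in Hdefect.
assert (HD : - k0 <= D <= k0) by (split; nra).
assert (Hp : 0 <= n1 * n2) by (apply Rmult_le_pos; assumption).
apply Rabs_le. unfold D in HD. destruct Hsg as [-> | ->]; split; nra.
Qed.

Definition circle_profile (sg s : R) : R :=
  b + c - (sqrt (a*s + b*(1-s)) + sg * sqrt (c*s + d*(1-s))) ^ 2 / 2.

Lemma defect_on_circle sg w : norm2 w = 1 ->
  0 <= fst w ^ 2 <= 1 /\ defect sg w = circle_profile sg (fst w ^ 2).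
Proof.
intros Hw. assert (Hsq := norm2_sq w). rewrite Hw in Hsq.
assert (0 <= fst w ^ 2) by apply pow2_ge_0. assert (0 <= snd w ^ 2) by apply pow2_ge_0.
split; [lra |]. unfold defect, circle_profile, wnorm1, wnorm2.
replace (snd w ^ 2) with (1 - fst w ^ 2) by lra. reflexivity.
Qed.

Lemma circle_point s : 0 <= s <= 1 ->
  norm2 (sqrt s, sqrt (1-s)) = 1 /\ fst (sqrt s, sqrt (1-s)) ^ 2 = s.
Proof.
intros Hs. unfold norm2. cbn [fst snd]. rewrite !pow2_sqrt by lra.
split; [| reflexivity]. replace (s + (1-s)) with 1 by ring. apply sqrt_1.
Qed.

Lemma circle_profile_sq_continuous sg s : 0 <= s <= 1 ->
  continuity_pt (fun s => circle_profile sg s ^ 2) s.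
Proof.
intros Hs. apply derivable_continuous_pt, ex_derive_Reals_0.
unfold circle_profile. auto_derive. repeat split; nra.
Qed.

(* Compactness of the circle: a strict bound defect^2 < kcrit^2 holds with a
   uniform constant k0^2, k0 < kcrit. *)
Lemma strict_defect_bound sg :
  (forall w : vec2, norm2 w = 1 -> defect sg w ^ 2 < kcrit ^ 2) ->
  exists k0, 0 <= k0 < kcrit /\
    forall w : vec2, norm2 w = 1 -> defect sg w ^ 2 <= k0 ^ 2.
Proof.
intros Hstrict.
destruct (continuity_ab_maj (fun s => circle_profile sg s ^ 2) 0 1 ltac:(lra)
  (circle_profile_sq_continuous sg)) as [s [Hmax Hs]].
destruct (circle_point s Hs) as [Hws Hfst].
assert (Hlt := Hstrict _ Hws). rewrite (proj2 (defect_on_circle sg _ Hws)), Hfst in Hlt.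
exists (Rabs (circle_profile sg s)). rewrite pow2_abs. split; [split |].
- apply Rabs_pos.
- assert (Hk := kcrit_pos). rewrite <- (pow2_abs (circle_profile sg s)) in Hlt.
  assert (0 <= Rabs (circle_profile sg s)) by apply Rabs_pos. nra.
- intros w Hw. destruct (defect_on_circle sg w Hw) as [Hw1 ->]. exact (Hmax _ Hw1).
Qed.

Lemma monotone_of_band : band_condition kcrit -> monotone (GB a b c d).
Proof.
intros Hband. apply monotone_of_jform_nonneg; [lra | lra | lra |].
intros X1 X2 h1 h2.
assert (H := form_margin kcrit (conj (Rlt_le _ _ kcrit_pos) (Rle_refl _)) Hband X1 X2 h1 h2).
rewrite margin_critical, !Rmult_0_l in H. exact H.
Qed.

(* Part (ii): below kcrit the margin kappa is positive; G minus del |u| u with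
   del = min(kappa, coef_min)/2 is G with lowered coefficients, still monotone,
   and del |u| u contributes del |u - v|^3 / 2. *)
Lemma three_monotone_of_band k0 : 0 <= k0 < kcrit -> band_condition k0 ->
  alpha_monotone 3 (GB a b c d).
Proof.
intros Hk0 Hband.
assert (Hkappa := margin_pos k0 Hk0).
destruct coef_min_bounds as (Hm & Hma & Hmb & Hmc & Hmd).
set (del := Rmin (margin k0 / 2) (coef_min / 2)).
assert (Hdel : 0 < del /\ del <= margin k0 / 2 /\ del <= coef_min / 2)
  by (unfold del; repeat split; [apply Rmin_case; lra | apply Rmin_l | apply Rmin_r]).
assert (Hshift := jform_shift_nonneg a b c d (margin k0) del ltac:(lra)
  (form_margin k0 ltac:(lra) Hband)).
assert (Hmono := monotone_of_jform_nonneg (a-del) (b-del) (c-del) (d-del)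
  ltac:(lra) ltac:(lra) ltac:(lra) Hshift).
exists (del / 2). split; [lra |]. intros u v.
specialize (Hmono u v). rewrite !GB_eq in Hmono |- *.
rewrite powr_3 by apply sqrt_pos. rewrite (GB_split a b c d del).
destruct u as [u1 u2], v as [v1 v2].
assert (Hcube := norm_scaled_3monotone u1 u2 v1 v2). cbn [vsub fst snd] in *.
assert (del * (norm2 (u1-v1, u2-v2) ^ 3 / 2) <=
        del * ((norm2 (u1, u2) * u1 - norm2 (v1, v2) * v1) * (u1 - v1)
               + (norm2 (u1, u2) * u2 - norm2 (v1, v2) * v2) * (u2 - v2)))
  by (apply Rmult_le_compat_l; lra).
change (vsub (u1, u2) (v1, v2)) with (u1 - v1, u2 - v2) in Hmono |- *. lra.
Qed.

End Positive_coefficients.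

Theorem mainTheorem4 (a b c d : R) (ha : 0 < a) (hb : 0 < b) (hc : 0 < c) (hd : 0 < d) :
  ( ((forall w : vec2, norm2 w = 1 ->
        (b + c - (wnorm1 a b w + wnorm2 c d w) ^ 2 / 2) ^ 2 <= 4 * a * d)
     \/ (forall w : vec2, norm2 w = 1 ->
        (b + c - (wnorm1 a b w - wnorm2 c d w) ^ 2 / 2) ^ 2 <= 4 * a * d))
    -> monotone (GB a b c d) )
  /\
  ( ((forall w : vec2, norm2 w = 1 ->
        (b + c - (wnorm1 a b w + wnorm2 c d w) ^ 2 / 2) ^ 2 < 4 * a * d)
     \/ (forall w : vec2, norm2 w = 1 ->
        (b + c - (wnorm1 a b w - wnorm2 c d w) ^ 2 / 2) ^ 2 < 4 * a * d))
    -> alpha_monotone 3 (GB a b c d) ).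
Proof.
assert (Hk := kcrit_pos a d ha hd). rewrite <- (kcrit_sq a d ha hd).
split; intros Hcond.
- destruct (either_condition a b c d (fun x => x ^ 2 <= kcrit a d ^ 2) Hcond)
    as [sg [Hsg Hdefect]].
  apply monotone_of_band; try assumption.
  apply band_of_defect with (sg := sg); try assumption; lra.
- destruct (either_condition a b c d (fun x => x ^ 2 < kcrit a d ^ 2) Hcond)
    as [sg [Hsg Hdefect]].
  destruct (strict_defect_bound a b c d ha hb hc hd sg Hdefect) as [k0 [Hk0 Hbound]].
  apply three_monotone_of_band with (k0 := k0); try assumption.
  apply band_of_defect with (sg := sg); try assumption; lra.
Qed.
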